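(* Let $(a_i),(b_i)$ be finitely supported integer sequences, neither identically zero, and $q_i=a_i-b_i$. The following are equivalent. (1) With $q_\mu$ the lowest-index nonzero $q_i$ and $q_\nu$ the highest-index nonzero $q_i$: (a) $a_l=0$ for $l<\mu$ and $l\ge\nu$; (b) $a_\mu=q_\mu>0$; (c) $\sum_iq_i=0$; (d) $\max(q_l,0)\le a_l\le\sum_{i\le l}q_i$ for all integers $l$. (2) With $a_\mu$ the lowest-index nonzero $a_i$ and $b_\nu$ the highest-index nonzero $b_i$: (a) all $a_i,b_i\ge0$; (b) $a_l=0$ for $l\ge\nu$ and $b_l=0$ for $l\le\mu$; (c) $\sum_ia_i=\sum_ib_i$; (d) $\sum_{i\le l}b_i\le\sum_{i<l}a_i$ for all integers $l$. (3) With $m=\sum a_i$, $n=\sum b_i$: (a) all $a_i,b_i\ge0$; (b) $m=n$; (c) for all $1\le\alpha\le m$, $1\le\beta\le n$ with $\beta\ge\alpha$, $S(a)_\alpha<S(b)_\beta$.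
   Context: For a finitely supported sequence $(c_i)$ of non-negative integers, $S(c)$ is the nondecreasing sequence of length $\sum_ic_i$, indexed from $1$, in which each integer $i$ appears exactly $c_i$ times. *)

From mathcomp Require Import all_boot all_order all_algebra.
Set Implicit Arguments. Unset Strict Implicit. Unset Printing Implicit Defensive.
Import Order.TTheory GRing.Theory Num.Theory.
Local Open Scope ring_scope.

Definition window (N : nat) : seq int :=
  [seq (k%:Z - N%:Z) | k <- iota 0 (N.*2.+1)].

Definition supported_in (N : nat) (c : int -> int) : Prop :=
  forall i : int, N%:Z < `|i| -> c i = 0.

Definition tot (N : nat) (c : int -> int) : int := \sum_(i <- window N) c i.
Definition psum_le (N : nat) (c : int -> int) (l : int) : int :=
  \sum_(i <- window N | i <= l) c i.
Definition psum_lt (N : nat) (c : int -> int) (l : int) : int :=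
  \sum_(i <- window N | i < l) c i.

(* S(c): nondecreasing sequence in which each i appears c_i times
   (meaningful when c is nonnegative). *)
Definition Sseq (N : nat) (c : int -> int) : seq int :=
  flatten [seq nseq (absz (c i)) i | i <- window N].
(* 1-indexed access S(c)_alpha *)
Definition Sat (N : nat) (c : int -> int) (alpha : nat) : int :=
  nth 0 (Sseq N c) alpha.-1.

Definition cond1 (N : nat) (a b : int -> int) : Prop :=
  let q := fun i => a i - b i in
  exists mu nu : int,
    [/\ q mu != 0, (forall i, i < mu -> q i = 0),
        q nu != 0, (forall i, nu < i -> q i = 0) &
    [/\ (forall l, (l < mu \/ nu <= l) -> a l = 0),
        a mu = q mu /\ 0 < q mu,
        tot N q = 0 &
        (forall l, Num.max (q l) 0 <= a l /\ a l <= psum_le N q l)]].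

Definition cond2 (N : nat) (a b : int -> int) : Prop :=
  exists mu nu : int,
    [/\ a mu != 0, (forall i, i < mu -> a i = 0),
        b nu != 0, (forall i, nu < i -> b i = 0) &
    [/\ (forall i, 0 <= a i /\ 0 <= b i),
        (forall l, nu <= l -> a l = 0) /\ (forall l, l <= mu -> b l = 0),
        tot N a = tot N b &
        (forall l, psum_le N b l <= psum_lt N a l)]].

Definition cond3 (N : nat) (a b : int -> int) : Prop :=
  let m := tot N a in let n := tot N b in
  [/\ (forall i, 0 <= a i /\ 0 <= b i),
      m = n &
      (forall alpha beta : nat, (1 <= alpha)%N -> alpha%:Z <= m ->
         (1 <= beta)%N -> beta%:Z <= n -> (alpha <= beta)%N ->
         Sat N a alpha < Sat N b beta)].

From mathcomp Require Import all_boot all_order all_algebra.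
From mathcomp Require Import zify.

Set Implicit Arguments.
Unset Strict Implicit.
Unset Printing Implicit Defensive.
Import Order.TTheory GRing.Theory Num.Theory.
Local Open Scope ring_scope.

(* For nonnegative [c], [sum_(i <= l) c_i] is the number of entries [<= l] of
   the sorted sequence [S(c)], and [sum_(i < l) c_i] the number of entries
   [< l].  In a sorted sequence [S_k <= l] iff [k] is below the number of
   entries [<= l], so (2d) is a comparison of ranks, equivalent to (3c).
   With [q = a - b] we have
   [sum_(i <= l) q_i = sum_(i < l) a_i + a_l - sum_(i <= l) b_i], which turns
   (1d) into nonnegativity plus (2d).  Given equal totals, (2d) at the ends
   [mu] and [nu] of the supports already forces the vanishing conditions. *)

Lemma nth_sorted_count (T : Type) (x0 : T) (leT : rel T) (P : pred T)
    (s : seq T) :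
  transitive leT -> (forall x y, leT x y -> P y -> P x) -> sorted leT s ->
  forall k, (k < size s)%N -> P (nth x0 s k) = (k < count P s)%N.
Proof.
move=> leT_tr P_down; elim: s => [|x s IHs] //= sorted_xs k lt_k.
have count0 : ~~ P x -> count P s = 0%N.
  move=> Px; apply/eqP; rewrite -leqn0 leqNgt -has_count -all_predC.
  apply: sub_all (order_path_min leT_tr sorted_xs) => y le_xy /=.
  by apply: contra Px; exact: P_down.
case: k lt_k => [|k] lt_k /=; case Px: (P x) => /=.
- by [].
- by rewrite count0 ?Px.
- by rewrite IHs ?(path_sorted sorted_xs).
- by rewrite IHs ?(path_sorted sorted_xs) // count0 ?Px.
Qed.

Lemma path_flatten_nseq (T : Type) (leT : rel T) (f : T -> nat) (x0 : T)
    (w : seq T) :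
  reflexive leT -> transitive leT ->
  path leT x0 w -> path leT x0 (flatten [seq nseq (f i) i | i <- w]).
Proof.
move=> leT_refl leT_tr; elim: w x0 => [|y w IHw] x0 //= /andP[le_x0y path_yw].
rewrite cat_path; case: (f y) => [|k] /=.
  by apply: IHw; apply: (path_le leT_tr le_x0y path_yw).
rewrite le_x0y; have -> : last y (nseq k y) = y by elim: k.
apply/andP; split; last exact: IHw.
by elim: k => //= k ->; rewrite leT_refl.
Qed.

Lemma sorted_flatten_nseq (T : Type) (leT : rel T) (f : T -> nat) (w : seq T) :
  reflexive leT -> transitive leT ->
  sorted leT w -> sorted leT (flatten [seq nseq (f i) i | i <- w]).
Proof.
move=> leT_refl leT_tr; case: w => [//|y w] path_yw.
apply: (@path_sorted _ leT y); apply: path_flatten_nseq => //=.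
by rewrite leT_refl.
Qed.

Lemma count_flatten_nseq (w : seq int) (c : int -> int) (P : pred int) :
  (forall i, 0 <= c i) ->
  (count P (flatten [seq nseq (absz (c i)) i | i <- w]))%:Z =
  \sum_(i <- w | P i) c i.
Proof.
move=> c_ge0; elim: w => [|x w IHw]; first by rewrite big_nil.
rewrite /= count_cat count_nseq PoszD big_cons IHw.
by case: (P x); rewrite ?mul1n ?mul0n ?add0r // gez0_abs.
Qed.

Section Window.
Variable N : nat.

Lemma mem_window (i : int) : `|i| <= N%:Z -> i \in window N.
Proof.
by move=> le_iN; apply/mapP; exists (absz (i + N%:Z)); rewrite ?mem_iota; lia.
Qed.

Lemma uniq_window : uniq (window N).
Proof. by rewrite map_inj_uniq ?iota_uniq // => x y /=; lia. Qed.

Lemma sorted_window : sorted <=%R (window N).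
Proof.
rewrite sorted_map; apply: sub_sorted (iota_sorted 0 _) => x y /= le_xy.
by rewrite lerD2r lez_nat.
Qed.

Lemma sum_window_nonneg_eq0 (c : int -> int) (P : pred int) (l : int) :
  supported_in N c -> (forall i, 0 <= c i) ->
  \sum_(i <- window N | P i) c i = 0 -> P l -> c l = 0.
Proof.
move=> c_supp c_ge0 /eqP sum0 Pl.
have [le_lN|] := leP `|l| N%:Z; last exact: c_supp.
move: sum0; rewrite (psumr_eq0 _ (fun i _ => c_ge0 i)).
by move/allP/(_ l (mem_window le_lN)); rewrite Pl => /eqP.
Qed.

Lemma psum_leE (c : int -> int) (l : int) : supported_in N c ->
  psum_le N c l = psum_lt N c l + c l.
Proof.
move=> c_supp; rewrite /psum_le /psum_lt (bigID (fun i => i < l)) /=.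
congr (_ + _).
  by apply: eq_bigl => i; case: ltP => lt_il; rewrite ?andbT ?andbF ?ltW.
rewrite (eq_bigl (pred1 l)) => [|i]; last by rewrite /= -leNgt -eq_le.
rewrite (eq_bigr (fun=> c l)) => [|i /eqP -> //].
rewrite big_const_seq count_uniq_mem ?uniq_window //.
have [le_lN|lt_Nl] := leP `|l| N%:Z; first by rewrite (mem_window le_lN) /= addr0.
by rewrite c_supp //; case: (l \in window N).
Qed.

Lemma psum_le_sub (a b : int -> int) (l : int) : supported_in N a ->
  psum_le N (fun i => a i - b i) l = psum_lt N a l + a l - psum_le N b l.
Proof. by move=> a_supp; rewrite /psum_le sumrB -/(psum_le N a l) psum_leE. Qed.

Lemma tot_sub (a b : int -> int) :
  tot N (fun i => a i - b i) = tot N a - tot N b.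
Proof. exact: sumrB. Qed.

End Window.

Lemma sorted_count_le_ltP {d : Order.disp_t} (T : porderType d) (x0 : T)
    (s t : seq T) :
  sorted <=%O s -> sorted <=%O t -> size s = size t ->
  (forall l, (count (fun x => x <= l)%O t <= count (fun x => x < l)%O s)%N) <->
  (forall i j, (i <= j)%N -> (j < size s)%N -> (nth x0 s i < nth x0 t j)%O).
Proof.
move=> sorted_s sorted_t eq_size.
have rank_le l k : (k < size t)%N ->
    (nth x0 t k <= l)%O = (k < count (fun x => x <= l)%O t)%N.
  apply: (@nth_sorted_count _ x0 _ (fun x => x <= l)%O _ le_trans _ sorted_t).
  by move=> x y; exact: le_trans.
have rank_lt l k : (k < size s)%N ->
    (nth x0 s k < l)%O = (k < count (fun x => x < l)%O s)%N.
  apply: (@nth_sorted_count _ x0 _ (fun x => x < l)%O _ le_trans _ sorted_s).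
  by move=> x y; exact: le_lt_trans.
split=> [counts_le i j le_ij lt_js | nth_lt l].
  rewrite rank_lt ?(leq_ltn_trans le_ij) //.
  apply: leq_trans (counts_le (nth x0 t j)).
  by rewrite -rank_le ?lexx -?eq_size // (leq_ltn_trans le_ij).
case count_t: (count _ t) => [//|k].
have lt_kt : (k < size t)%N by rewrite -count_t count_size.
have lt_ks : (k < size s)%N by rewrite eq_size.
rewrite -rank_lt //; apply: (lt_le_trans (nth_lt k k (leqnn k) lt_ks)).
by rewrite rank_le // count_t.
Qed.

Lemma exists_least_nonzero (N : nat) (c : int -> int) :
  supported_in N c -> (exists i, c i != 0) ->
  exists mu, c mu != 0 /\ (forall i, i < mu -> c i = 0).
Proof.
move=> c_supp c_neq0.
have nz_le_N i : c i != 0 -> `|i| <= N%:Z.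
  by apply: contraNT; rewrite -ltNge => /c_supp ->.
have shiftK i : `|i| <= N%:Z -> (absz (i + N%:Z))%:Z - N%:Z = i by lia.
have ex_nz : exists k : nat, c (k%:Z - N%:Z) != 0.
  by case: c_neq0 => i nz_i; exists (absz (i + N%:Z)); rewrite shiftK ?nz_le_N.
case: (ex_minnP ex_nz) => m nz_m min_m; exists (m%:Z - N%:Z); split=> // i lt_i.
apply/eqP; apply: contraTT lt_i => nz_i; rewrite -leNgt.
have le_iN := nz_le_N i nz_i.
by have := min_m (absz (i + N%:Z)); rewrite shiftK // => /(_ nz_i); lia.
Qed.

Lemma exists_greatest_nonzero (N : nat) (c : int -> int) :
  supported_in N c -> (exists i, c i != 0) ->
  exists nu, c nu != 0 /\ (forall i, nu < i -> c i = 0).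
Proof.
move=> c_supp [i nz_i].
have [||mu [nz_mu below_mu]] := @exists_least_nonzero N (fun i => c (- i)).
- by move=> j; rewrite -normrN => /c_supp.
- by exists (- i); rewrite opprK.
by exists (- mu); split=> // j lt_j; rewrite -(opprK j) below_mu // ltrNl.
Qed.

Section SortedExpansion.
Variable N : nat.

Lemma sorted_Sseq (c : int -> int) : sorted <=%R (Sseq N c).
Proof. exact: sorted_flatten_nseq lexx le_trans (sorted_window N). Qed.

Lemma size_Sseq (c : int -> int) : (forall i, 0 <= c i) ->
  (size (Sseq N c))%:Z = tot N c.
Proof. by move=> c_ge0; rewrite -count_predT count_flatten_nseq. Qed.

Lemma psum_le_count (c : int -> int) (l : int) : (forall i, 0 <= c i) ->
  psum_le N c l = (count (fun x => x <= l) (Sseq N c))%:Z.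
Proof. by move=> c_ge0; rewrite count_flatten_nseq. Qed.

Lemma psum_lt_count (c : int -> int) (l : int) : (forall i, 0 <= c i) ->
  psum_lt N c l = (count (fun x => x < l) (Sseq N c))%:Z.
Proof. by move=> c_ge0; rewrite count_flatten_nseq. Qed.

Lemma psum_dominance_iff_Sat_lt (a b : int -> int) :
  (forall i, 0 <= a i) -> (forall i, 0 <= b i) -> tot N a = tot N b ->
  (forall l, psum_le N b l <= psum_lt N a l) <->
  (forall alpha beta : nat, (1 <= alpha)%N -> alpha%:Z <= tot N a ->
     (1 <= beta)%N -> beta%:Z <= tot N b -> (alpha <= beta)%N ->
     Sat N a alpha < Sat N b beta).
Proof.
move=> a_ge0 b_ge0 eq_tot.
have size_a := size_Sseq a_ge0; have size_b := size_Sseq b_ge0.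
have eq_size : size (Sseq N a) = size (Sseq N b) by lia.
have [to_nth to_counts] :=
  sorted_count_le_ltP 0 (sorted_Sseq a) (sorted_Sseq b) eq_size.
split=> [dom alpha beta | Sat_lt l].
  move=> ge1_alpha le_alpha ge1_beta le_beta le_ab; rewrite /Sat.
  apply: to_nth; [move=> l | by rewrite -!subn1 leq_sub2r | ].
    by rewrite -lez_nat -psum_le_count // -psum_lt_count.
  by rewrite prednK // -lez_nat size_a eq_tot.
rewrite psum_le_count // psum_lt_count // lez_nat.
apply: to_counts => i j le_ij lt_j.
have := Sat_lt i.+1 j.+1; apply=> //; rewrite -?eq_tot -size_a lez_nat //.
exact: leq_ltn_trans le_ij lt_j.
Qed.

End SortedExpansion.

Section Dominance.
Variables (N : nat) (a b : int -> int).
Hypotheses (a_supp : supported_in N a) (b_supp : supported_in N b).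
Hypotheses (a_ge0 : forall i, 0 <= a i) (b_ge0 : forall i, 0 <= b i).
Hypothesis eq_tot : tot N a = tot N b.
Hypothesis dom : forall l, psum_le N b l <= psum_lt N a l.

(* [psum_le N b nu] is already the whole mass of [b], hence of [a], so [a] has
   no mass left at or above [nu]. *)
Lemma dominance_vanish_above (nu : int) :
  (forall i, nu < i -> b i = 0) -> forall l, nu <= l -> a l = 0.
Proof.
move=> b_above.
have psum_b_nu : psum_le N b nu = tot N b.
  rewrite /psum_le /tot big_mkcond /=; apply: eq_bigr => i _.
  by case: leP => // /b_above ->.
have split_tot : tot N a =
    psum_lt N a nu + \sum_(i <- window N | ~~ (i < nu)) a i.
  by rewrite /tot (bigID (fun i => i < nu)).
have tail0 : \sum_(i <- window N | ~~ (i < nu)) a i = 0.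
  apply/eqP; rewrite eq_le sumr_ge0 => [|i _]; last exact: a_ge0.
  by rewrite andbT -(lerD2l (psum_lt N a nu)) addr0 -split_tot eq_tot -psum_b_nu dom.
by move=> l le_nu_l; apply: sum_window_nonneg_eq0 tail0 _; rewrite // -leNgt.
Qed.

Lemma dominance_vanish_below (mu : int) :
  (forall i, i < mu -> a i = 0) -> forall l, l <= mu -> b l = 0.
Proof.
move=> a_below.
have psum_b_mu : psum_le N b mu = 0.
  apply/eqP; rewrite eq_le sumr_ge0 ?andbT => [|i _]; last exact: b_ge0.
  by apply: le_trans (dom mu) _; rewrite /psum_lt big1 // => i /a_below.
by move=> l le_l_mu; apply: sum_window_nonneg_eq0 psum_b_mu _.
Qed.

End Dominance.

Section Conditions.
Variables (N : nat) (a b : int -> int).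
Hypotheses (a_supp : supported_in N a) (b_supp : supported_in N b).
Hypotheses (a_neq0 : exists i, a i != 0) (b_neq0 : exists i, b i != 0).

Lemma cond2_of_dominance :
  (forall i, 0 <= a i) -> (forall i, 0 <= b i) -> tot N a = tot N b ->
  (forall l, psum_le N b l <= psum_lt N a l) -> cond2 N a b.
Proof.
move=> a_ge0 b_ge0 eq_tot dom.
have [mu [nz_mu a_below]] := exists_least_nonzero a_supp a_neq0.
have [nu [nz_nu b_above]] := exists_greatest_nonzero b_supp b_neq0.
exists mu, nu; split=> //; split=> //.
split; first exact: (dominance_vanish_above a_supp a_ge0 eq_tot dom b_above).
exact: (dominance_vanish_below b_supp b_ge0 dom a_below).
Qed.

Lemma cond1_cond2 : cond1 N a b -> cond2 N a b.
Proof.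
case=> _ [_ [_ _ _ _ [_ _ tot_q bounds]]].
have a_ge0 i : 0 <= a i by case: (bounds i); rewrite ge_max => /andP[].
have b_ge0 i : 0 <= b i by case: (bounds i); rewrite ge_max gerBl => /andP[].
apply: cond2_of_dominance => // [|l].
  by apply/eqP; rewrite -subr_eq0 -tot_sub tot_q.
by case: (bounds l) => _; rewrite psum_le_sub // addrAC lerDr subr_ge0.
Qed.

Lemma cond2_cond1 : cond2 N a b -> cond1 N a b.
Proof.
case=> mu [nu [nz_a_mu a_below nz_b_nu b_above]].
case=> nonneg [a_above b_below] eq_tot dom.
have b_mu : b mu = 0 by apply: b_below.
have a_nu : a nu = 0 by apply: a_above.
exists mu, nu; split.
- by rewrite b_mu subr0.
- by move=> i lt_i; rewrite a_below ?b_below ?ltW.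
- by rewrite a_nu sub0r oppr_eq0.
- by move=> i lt_i; rewrite b_above ?a_above ?ltW.
split.
- by move=> l [/a_below | /a_above].
- by rewrite b_mu subr0 lt_def nz_a_mu; case: (nonneg mu).
- by rewrite tot_sub eq_tot subrr.
- move=> l; case: (nonneg l) => a_ge0 b_ge0.
  by rewrite ge_max psum_le_sub // addrAC lerDr subr_ge0 dom gerBl b_ge0 a_ge0.
Qed.

Lemma cond2_cond3 : cond2 N a b -> cond3 N a b.
Proof.
case=> _ [_ [_ _ _ _ [nonneg _ eq_tot dom]]].
have a_ge0 i : 0 <= a i by case: (nonneg i).
have b_ge0 i : 0 <= b i by case: (nonneg i).
by split=> //; apply/psum_dominance_iff_Sat_lt.
Qed.

Lemma cond3_cond2 : cond3 N a b -> cond2 N a b.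
Proof.
case=> nonneg eq_tot Sat_lt.
have a_ge0 i : 0 <= a i by case: (nonneg i).
have b_ge0 i : 0 <= b i by case: (nonneg i).
by apply: cond2_of_dominance => //; apply/psum_dominance_iff_Sat_lt.
Qed.

End Conditions.

Theorem mainTheorem14 (N : nat) (a b : int -> int) :
  supported_in N a -> supported_in N b ->
  (exists i, a i != 0) -> (exists i, b i != 0) ->
  (cond1 N a b <-> cond2 N a b) /\ (cond2 N a b <-> cond3 N a b).
Proof.
move=> a_supp b_supp a_neq0 b_neq0; split; split.
- exact: cond1_cond2.
- exact: cond2_cond1.
- exact: cond2_cond3.
- exact: cond3_cond2.
Qed.
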